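(* For $s_1,s_2\in\mathbb{Z}_{\ge0}$ and integers $n_1,n_2\ge1$: \begin{align*} ((\mathcal{T}*\phi)^{n_2-n_1}*\mathcal{T})(s_2,s_1)&=\Gamma(n_1,-\tfrac12,s_1;n_2,\tfrac12,s_2)\quad(n_1\le n_2),\\ (\mathcal{T}*\phi)^{n_2-n_1}(s_2,s_1)&=\Gamma(n_1,\tfrac12,s_1;n_2,\tfrac12,s_2)\quad(n_1<n_2),\\ ((\phi*\mathcal{T})^{n_2-n_1-1}*\phi)(s_2,s_1)&=\Gamma(n_1,\tfrac12,s_1;n_2,-\tfrac12,s_2)\quad(n_1<n_2),\\ (\phi*\mathcal{T})^{n_2-n_1}(s_2,s_1)&=\Gamma(n_1,-\tfrac12,s_1;n_2,-\tfrac12,s_2)\quad(n_1<n_2). \end{align*}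
   Context: Matrices on $\mathbb{Z}_{\ge0}\times\mathbb{Z}_{\ge0}$: $\mathcal{T}(x,y)=0$ if $x<y$, $1$ if $x\ge y=0$, $2$ if $x\ge y>0$; $\phi(x,y)=1$ if $x>y$, $0$ otherwise; $(f*g)(x,y)=\sum_{z\ge0}f(x,z)g(z,y)$, and the $0$-th power is the identity. $\mathsf{J}^{(-1/2,-1/2)}_s(\cos\theta)=\cos s\theta$, $\mathsf{J}^{(1/2,-1/2)}_s(\cos\theta)=\sin((s+\frac12)\theta)/\sin(\theta/2)$; $W^{(-1/2,-1/2)}(0)=1$, $W^{(-1/2,-1/2)}(s)=2$ ($s>0$), $W^{(1/2,-1/2)}\equiv1$. For $a_1,a_2\in\{\pm\frac12\}$ with $2n_1+a_1<2n_2+a_2$, \[\Gamma(n_1,a_1,s_1;n_2,a_2,s_2)=-\frac{W^{(a_1,-1/2)}(s_1)}{\pi}\frac1{2\pi i}\int_{-1}^1\oint\mathsf{J}^{(a_1,-1/2)}_{s_1}(x)\mathsf{J}^{(a_2,-1/2)}_{s_2}(u)(u-1)^{n_1-n_2}\frac{(1-x)^{a_1}(1+x)^{-1/2}}{x-u}\,du\,dx,\] where the $u$-contour is a positively oriented simple loop containing $[-1,1]$. *)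

From Stdlib Require Import Reals ZArith.
From Coquelicot Require Import Coquelicot.

Definition mat := nat -> nat -> R.

Definition mconv (f g : mat) : mat :=
  fun x y => Series (fun z => f x z * g z y)%R.

Definition mid : mat := fun x y => if Nat.eqb x y then 1%R else 0%R.

Fixpoint mpow (f : mat) (k : nat) : mat :=
  match k with
  | O => mid
  | S k' => mconv (mpow f k') f
  end.

Definition Tm : mat := fun x y =>
  if Nat.ltb x y then 0%R else if Nat.eqb y 0 then 1%R else 2%R.

Definition phim : mat := fun x y => if Nat.ltb y x then 1%R else 0%R.

Inductive half := mhalf | phalf.
Definition aval (a : half) : R :=
  match a with mhalf => (-(1/2))%R | phalf => (1/2)%R end.

Definition Wt (a : half) (s : nat) : R :=
  match a with
  | mhalf => match s with O => 1%R | _ => 2%R end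
  | phalf => 1%R
  end.

Open Scope C_scope.

(** Jacobi polynomials J^{(a,-1/2)}_s, as polynomial functions on C, via the
    three-term recurrence (J_{s+1} = 2 z J_s - J_{s-1}); see the lemmas
    [J_mhalf_cos] and [J_phalf_cos] below connecting them to the defining
    trigonometric formulas. *)
Fixpoint Jpair (a : half) (s : nat) (z : C) : C * C :=
  match s with
  | O => (RtoC 1, match a with mhalf => z | phalf => 2 * z + 1 end)
  | S s' => let (p, q) := Jpair a s' z in (q, 2 * z * q - p)
  end.
Definition J (a : half) (s : nat) (z : C) : C := fst (Jpair a s z).

Definition Cpowz (z : C) (k : Z) : C :=
  if (0 <=? k)%Z then Cpow z (Z.to_nat k) else / Cpow z (Z.to_nat (- k)).

Definition circ (c : C) (r th : R) : C := c + (RtoC r) * (cos th, sin th).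
Definition dcirc (r th : R) : C := (RtoC r) * (- sin th, cos th)%R.

Definition Gintegrand (n1 : nat) (a1 : half) (s1 : nat)
  (n2 : nat) (a2 : half) (s2 : nat) (x : R) (u : C) : C :=
  J a1 s1 (RtoC x) * J a2 s2 u * Cpowz (u - 1) (Z.of_nat n1 - Z.of_nat n2)%Z
  * (RtoC (Rpower (1 - x) (aval a1) * Rpower (1 + x) (- (1/2))))
  / (RtoC x - u).

(** [Gamma_is ... c r v]: with the u-contour being the positively oriented
    circle of centre c and radius r, the improper integral over x in (-1,1)
    of the contour integral over u exists and
    - W/pi * 1/(2 pi i) * int_{-1}^1 oint ... du dx  =  v. *)
Definition Gamma_is (n1 : nat) (a1 : half) (s1 : nat)
  (n2 : nat) (a2 : half) (s2 : nat) (c : C) (r : R) (v : C) : Prop :=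
  exists I : C,
    @is_RInt_gen C_R_NormedModule
      (fun x : R => @RInt C_R_CompleteNormedModule
         (fun th => Gintegrand n1 a1 s1 n2 a2 s2 x (circ c r th) * dcirc r th)
         0 (2 * PI))
      (at_right (-1)) (at_left 1) I
    /\ v = RtoC (- Wt a1 s1 / PI) * (/ (RtoC (2 * PI) * Ci)) * I.

Close Scope C_scope.

(** Sanity lemmas: the recurrence-defined J agree with the paper's
    trigonometric definition
    J^{(-1/2,-1/2)}_s(cos t) = cos(s t),
    J^{(1/2,-1/2)}_s(cos t) = sin((s+1/2) t)/sin(t/2). *)
Lemma Jpair_rec (a : half) (t : R) (f : nat -> R)
  (H0 : f 0%nat = 1%R)
  (H1 : RtoC (f 1%nat) = snd (Jpair a 0 (RtoC (cos t))))
  (Hrec : forall k, f (S (S k)) = (2 * cos t * f (S k) - f k)%R) :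
  forall s, Jpair a s (RtoC (cos t)) = (RtoC (f s), RtoC (f (S s))).
Proof.
  induction s as [|s IH].
  - simpl in H1 |- *. rewrite H0, H1. reflexivity.
  - simpl. rewrite IH. rewrite Hrec. f_equal.
    unfold RtoC, Cmult, Cminus, Cplus, Copp; simpl. f_equal; ring.
Qed.

Lemma J_mhalf_cos (s : nat) (t : R) :
  J mhalf s (RtoC (cos t)) = RtoC (cos (INR s * t)).
Proof.
  unfold J. rewrite (Jpair_rec mhalf t (fun k => cos (INR k * t))); auto.
  - simpl. rewrite Rmult_0_l, cos_0. reflexivity.
  - simpl. rewrite Rmult_1_l. reflexivity.
  - intros k. rewrite !S_INR.
    replace ((INR k + 1 + 1) * t)%R with ((INR k + 1) * t + t)%R by ring.
    replace (INR k * t)%R with ((INR k + 1) * t - t)%R by ring.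
    rewrite cos_plus, cos_minus. ring.
Qed.

Lemma J_phalf_cos (s : nat) (t : R) :
  sin (t / 2) <> 0%R ->
  J phalf s (RtoC (cos t)) = RtoC (sin ((INR s + 1/2) * t) / sin (t / 2)).
Proof.
  intros Hs. unfold J.
  rewrite (Jpair_rec phalf t (fun k => sin ((INR k + 1/2) * t) / sin (t / 2))%R);
    auto.
  - simpl.  replace ((0 + 1/2) * t)%R with (t/2)%R by field. field; auto.
  - simpl. unfold RtoC, Cmult, Cplus; simpl. f_equal; [|ring].
    set (h := (t / 2)%R) in *.
    replace ((1 + 1/2) * t)%R with (h + 2 * h)%R by (unfold h; field).
    replace t with (2 * h)%R by (unfold h; field).
    rewrite sin_plus, cos_2a, sin_2a.
    pose proof (sin2_cos2 h) as E. unfold Rsqr in E.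
    field_simplify; auto.
    replace (- sin h ^ 3 + 3 * sin h * cos h ^ 2)%R
      with (sin h * (-2 * sin h ^ 2 + 2 * cos h ^ 2 + 1))%R
      by (rewrite <- E; ring).
    field. auto.
  - intros k. rewrite !S_INR.
    replace ((INR k + 1 + 1 + 1/2) * t)%R with ((INR k + 1 + 1/2) * t + t)%R by ring.
    replace ((INR k + 1/2) * t)%R with ((INR k + 1 + 1/2) * t - t)%R by ring.
    rewrite sin_plus, sin_minus. field. auto.
Qed.

(** For fixed x in (-1,1) the inner contour integral is a residue computation at the two
    poles u = x and u = 1.  The relations
    J^{(-1/2)}_s(u) = 1 + (u - 1) \sum_{k<s} J^{(1/2)}_k(u)  and
    J^{(1/2)}_s(u) = \sum_k T(s,k) J^{(-1/2)}_k(u)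
    lower the order of the pole at u = 1 by one at the price of one multiplication by
    phi or by T, so the inner integral equals -2 pi i \sum_k M(s2,k) J^{(a1)}_k(x), with
    M the matrix product of the statement (the pole at 1 itself contributes nothing
    once its order is exhausted).  The outer integral then extracts M(s2,s1) by the
    orthogonality of the J^{(a1)}_k for the weight (1-x)^{a1}(1+x)^{-1/2}, which after
    the substitution x = cos t is the orthogonality of cosines, with explicit
    antiderivatives. *)

From Stdlib Require Import Reals ZArith Lra Lia FunctionalExtensionality.
From Coquelicot Require Import Coquelicot.

(** * Derivatives of functions R -> C *)

(** Coquelicot's derivative lemmas at type [R -> R]: the generic statements are phrased with
    [plus], [opp], [scal], which do not unify with [Rplus], [Ropp], [Rmult] in our goals. *)
Lemma is_derive_Req (f : R -> R) (t a b : R) : is_derive f t a -> a = b -> is_derive f t b.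
Proof. intros H <-; exact H. Qed.

Lemma is_derive_Rext (f g : R -> R) t a :
  (forall s, f s = g s) -> is_derive f t a -> is_derive g t a.
Proof. apply is_derive_ext. Qed.

Lemma is_derive_Rconst (k t : R) : is_derive (fun _ => k) t 0%R.
Proof. apply (is_derive_const (K := R_AbsRing) k). Qed.

Lemma is_derive_Rplus (f g : R -> R) t a b : is_derive f t a -> is_derive g t b ->
  is_derive (fun s => f s + g s)%R t (a + b)%R.
Proof. intros; apply (is_derive_plus f g); auto. Qed.

Lemma is_derive_Ropp (f : R -> R) t a : is_derive f t a -> is_derive (fun s => - f s)%R t (- a)%R.
Proof. intros; apply (is_derive_opp f); auto. Qed.

Lemma is_derive_Rminus (f g : R -> R) t a b : is_derive f t a -> is_derive g t b ->
  is_derive (fun s => f s - g s)%R t (a - b)%R.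
Proof. intros; apply (is_derive_minus f g); auto. Qed.

Lemma is_derive_Rmult (f g : R -> R) t a b : is_derive f t a -> is_derive g t b ->
  is_derive (fun s => f s * g s)%R t (a * g t + f t * b)%R.
Proof. intros; apply (Derive.is_derive_mult f g); auto. Qed.

Definition is_derive_RC (f : R -> C) (t : R) (df : C) : Prop :=
  is_derive (fun s => fst (f s)) t (fst df) /\ is_derive (fun s => snd (f s)) t (snd df).
Definition ex_derive_RC (f : R -> C) (t : R) : Prop := exists df, is_derive_RC f t df.

Lemma is_derive_RC_eq f t df df' : is_derive_RC f t df -> df = df' -> is_derive_RC f t df'.
Proof. intros H ->; auto. Qed.

Lemma is_derive_RC_ext f g t df :
  (forall s, f s = g s) -> is_derive_RC f t df -> is_derive_RC g t df.
Proof.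
  intros H [H1 H2]; split; (eapply is_derive_ext; [|eassumption]); intros; simpl; rewrite H; auto.
Qed.

Lemma is_derive_RC_const k t : is_derive_RC (fun _ => k) t 0%C.
Proof. split; apply is_derive_Rconst. Qed.

Lemma is_derive_RC_plus f g t df dg : is_derive_RC f t df -> is_derive_RC g t dg ->
  is_derive_RC (fun s => f s + g s)%C t (df + dg)%C.
Proof. intros [H1 H2] [H3 H4]; split; simpl; apply is_derive_Rplus; auto. Qed.

Lemma is_derive_RC_opp f t df : is_derive_RC f t df -> is_derive_RC (fun s => - f s)%C t (- df)%C.
Proof. intros [H1 H2]; split; apply is_derive_Ropp; auto. Qed.

Lemma is_derive_RC_minus f g t df dg : is_derive_RC f t df -> is_derive_RC g t dg ->
  is_derive_RC (fun s => f s - g s)%C t (df - dg)%C.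
Proof. intros; apply is_derive_RC_plus, is_derive_RC_opp; auto. Qed.

Lemma is_derive_RC_mult f g t df dg : is_derive_RC f t df -> is_derive_RC g t dg ->
  is_derive_RC (fun s => f s * g s)%C t (df * g t + f t * dg)%C.
Proof.
  intros [H1 H2] [H3 H4]; split.
  - apply (is_derive_Rext (fun s => fst (f s) * fst (g s) - snd (f s) * snd (g s))%R).
    { intros s; destruct (f s), (g s); reflexivity. }
    replace (fst (df * g t + f t * dg))%C with
      (fst df * fst (g t) + fst (f t) * fst dg - (snd df * snd (g t) + snd (f t) * snd dg))%R
      by (destruct (f t), (g t), df, dg; simpl; ring).
    apply is_derive_Rminus; apply (is_derive_Rmult (fun s => _ (f s)) (fun s => _ (g s))); auto.
  - apply (is_derive_Rext (fun s => fst (f s) * snd (g s) + snd (f s) * fst (g s))%R).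
    { intros s; destruct (f s), (g s); reflexivity. }
    replace (snd (df * g t + f t * dg))%C with
      (fst df * snd (g t) + fst (f t) * snd dg + (snd df * fst (g t) + snd (f t) * fst dg))%R
      by (destruct (f t), (g t), df, dg; simpl; ring).
    apply is_derive_Rplus; apply (is_derive_Rmult (fun s => _ (f s)) (fun s => _ (g s))); auto.
Qed.

Lemma is_derive_RC_inv f t df : is_derive_RC f t df -> f t <> 0%C ->
  is_derive_RC (fun s => / f s)%C t (- df / (f t * f t))%C.
Proof.
  intros [H1 H2] Hnz.
  pose (N := fun s => (fst (f s) ^ 2 + snd (f s) ^ 2)%R).
  assert (Hn : N t <> 0%R).
  { unfold N; destruct (f t) as [a b]; simpl. intro E. apply Hnz.
    assert (a = 0 /\ b = 0)%R as [-> ->] by nra. reflexivity. }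
  assert (HN : is_derive N t
    (fst df * fst (f t) + fst (f t) * fst df + (snd df * snd (f t) + snd (f t) * snd df))%R).
  { apply (is_derive_Rext (fun s => fst (f s) * fst (f s) + snd (f s) * snd (f s))%R).
    { intros; unfold N; ring. }
    apply is_derive_Rplus; apply (is_derive_Rmult (fun s => _ (f s)) (fun s => _ (f s))); auto. }
  split.
  - apply (is_derive_Rext (fun s => fst (f s) / N s)%R); [reflexivity|].
    replace (fst (- df / (f t * f t)))%C
      with ((fst df * N t - fst (f t) * (fst df * fst (f t) + fst (f t) * fst df
             + (snd df * snd (f t) + snd (f t) * snd df))) / N t ^ 2)%R.
    + apply (is_derive_div (fun s => fst (f s)) N); auto.
    + unfold N in *. destruct (f t) as [a b], df as [e h]; simpl in *.
      field. split; [|nra]. intro E; apply Hn. nra.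
  - apply (is_derive_Rext (fun s => - snd (f s) / N s)%R); [reflexivity|].
    replace (snd (- df / (f t * f t)))%C
      with ((- snd df * N t - - snd (f t) * (fst df * fst (f t) + fst (f t) * fst df
             + (snd df * snd (f t) + snd (f t) * snd df))) / N t ^ 2)%R.
    + apply (is_derive_div (fun s => - snd (f s))%R N); auto. now apply is_derive_Ropp.
    + unfold N in *. destruct (f t) as [a b], df as [e h]; simpl in *.
      field. split; [|nra]. intro E; apply Hn. nra.
Qed.

Lemma is_derive_RC_scal k f t df : is_derive_RC f t df ->
  is_derive_RC (fun s => k * f s)%C t (k * df)%C.
Proof.
  intros H. eapply is_derive_RC_eq.
  - apply (is_derive_RC_mult (fun _ => k) f _ 0%C df); [apply is_derive_RC_const|exact H].
  - ring.
Qed.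

Lemma is_derive_RC_pow f t df n : is_derive_RC f t df ->
  is_derive_RC (fun s => Cpow (f s) (S n)) t (RtoC (INR (S n)) * Cpow (f t) n * df)%C.
Proof.
  intros H. induction n as [|n IH].
  - eapply is_derive_RC_eq.
    + apply (is_derive_RC_ext f); [intros s; simpl; ring|exact H].
    + simpl. ring.
  - eapply is_derive_RC_eq.
    + apply (is_derive_RC_mult _ _ _ _ _ H IH).
    + rewrite (S_INR (S n)), RtoC_plus. simpl. ring.
Qed.

Lemma is_derive_RC_circ c r t : is_derive_RC (circ c r) t (dcirc r t).
Proof.
  unfold circ, dcirc; split; simpl.
  - apply (is_derive_Rext (fun s => fst c + (r * cos s - 0 * sin s))%R); [reflexivity|].
    auto_derive; auto. ring.
  - apply (is_derive_Rext (fun s => snd c + (r * sin s + 0 * cos s))%R); [reflexivity|].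
    auto_derive; auto. ring.
Qed.

Lemma ex_derive_RC_dcirc r t : ex_derive_RC (dcirc r) t.
Proof.
  exists (RtoC r * ((- cos t)%R, (- sin t)%R))%C. unfold dcirc; split; simpl.
  - apply (is_derive_Rext (fun s => (r * - sin s - 0 * cos s))%R); [reflexivity|].
    auto_derive; auto. ring.
  - apply (is_derive_Rext (fun s => (r * cos s + 0 * - sin s))%R); [reflexivity|].
    auto_derive; auto. ring.
Qed.

Lemma ex_derive_RC_mult f g t : ex_derive_RC f t -> ex_derive_RC g t ->
  ex_derive_RC (fun s => f s * g s)%C t.
Proof. intros [a Ha] [b Hb]; eexists; apply is_derive_RC_mult; eauto. Qed.

Lemma ex_derive_RC_continuous f t : ex_derive_RC f t ->
  continuous (fun s => fst (f s)) t /\ continuous (fun s => snd (f s)) t.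
Proof.
  intros [df [H1 H2]]; split;
    apply (ex_derive_continuous (K := R_AbsRing) (V := R_NormedModule)); eexists; eauto.
Qed.

Lemma is_RInt_derive_RC (F f : R -> C) a b : a <= b ->
  (forall t, a <= t <= b -> is_derive_RC F t (f t)) ->
  (forall t, a <= t <= b -> ex_derive_RC f t) ->
  @is_RInt C_R_NormedModule f a b (F b - F a)%C.
Proof.
  intros Hab HD HC.
  replace (F b - F a)%C with (fst (F b) - fst (F a), snd (F b) - snd (F a))%R
    by (destruct (F b), (F a); unfold Cminus, Cplus, Copp; simpl; f_equal; ring).
  apply (is_RInt_fct_extend_pair (U := R_NormedModule) (V := R_NormedModule)).
  - apply (is_RInt_derive (V := R_CompleteNormedModule) (fun s => fst (F s)) (fun s => fst (f s)));
      intros x Hx; rewrite Rmin_left, Rmax_right in Hx by auto.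
    + apply HD; auto.
    + apply ex_derive_RC_continuous, HC; auto.
  - apply (is_RInt_derive (V := R_CompleteNormedModule) (fun s => snd (F s)) (fun s => snd (f s)));
      intros x Hx; rewrite Rmin_left, Rmax_right in Hx by auto.
    + apply HD; auto.
    + apply ex_derive_RC_continuous, HC; auto.
Qed.

(** * Integrals over a circle *)

Lemma is_RInt_Cmult (f : R -> C) a b v k :
  @is_RInt C_R_NormedModule f a b v ->
  @is_RInt C_R_NormedModule (fun t => k * f t)%C a b (k * v)%C.
Proof.
  intros H.
  pose proof (is_RInt_fct_extend_fst (U := R_NormedModule) (V := R_NormedModule) f a b v H) as H1.
  pose proof (is_RInt_fct_extend_snd (U := R_NormedModule) (V := R_NormedModule) f a b v H) as H2.
  destruct k as [k1 k2].
  replace ((k1, k2) * v)%C with ((k1 * fst v - k2 * snd v)%R, (k1 * snd v + k2 * fst v)%R)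
    by (destruct v; reflexivity).
  apply (is_RInt_fct_extend_pair (U := R_NormedModule) (V := R_NormedModule)).
  - apply (is_RInt_minus (V := R_NormedModule) (fun t => k1 * fst (f t)) (fun t => k2 * snd (f t)))%R.
    + apply (is_RInt_scal (V := R_NormedModule) (fun t => fst (f t))); auto.
    + apply (is_RInt_scal (V := R_NormedModule) (fun t => snd (f t))); auto.
  - apply (is_RInt_plus (V := R_NormedModule) (fun t => k1 * snd (f t)) (fun t => k2 * fst (f t)))%R.
    + apply (is_RInt_scal (V := R_NormedModule) (fun t => snd (f t))); auto.
    + apply (is_RInt_scal (V := R_NormedModule) (fun t => fst (f t))); auto.
Qed.

Definition is_circle_integral (c : C) (r : R) (f : C -> C) (v : C) : Prop :=
  @is_RInt C_R_NormedModule (fun th => (f (circ c r th) * dcirc r th)%C) 0 (2 * PI) v.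

Definition two_pi_i : C := (0%R, (2 * PI)%R).

Lemma RtoC_neq_0 (x : R) : x <> 0%R -> RtoC x <> 0%C.
Proof. intros H E. apply H. exact (f_equal fst E). Qed.

Lemma Cmod_circ_sub c r th : 0 <= r -> Cmod (circ c r th - c) = r.
Proof.
  intros Hr. unfold circ.
  replace (c + RtoC r * (cos th, sin th) - c)%C with (RtoC r * (cos th, sin th))%C by ring.
  rewrite Cmod_mult, Cmod_R, Rabs_right by lra.
  assert (E : (cos th ^ 2 + sin th ^ 2 = 1)%R).
  { pose proof (sin2_cos2 th) as E; unfold Rsqr in E; nra. }
  unfold Cmod; cbn [fst snd]. rewrite E, sqrt_1. ring.
Qed.

Lemma circ_neq_inside c r a u : (Cmod (a - c) < r)%R -> Cmod (u - c) = r -> u <> a.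
Proof. intros H1 H2 ->. lra. Qed.

Lemma circ_2PI c r : circ c r (2 * PI) = circ c r 0.
Proof. unfold circ. rewrite cos_2PI, sin_2PI, cos_0, sin_0. reflexivity. Qed.

Section CircleIntegral.

Variables (c : C) (r : R).

Lemma is_circle_integral_eq f v v' : is_circle_integral c r f v -> v = v' ->
  is_circle_integral c r f v'.
Proof. intros H ->; auto. Qed.

Lemma is_circle_integral_ext f g v : 0 <= r ->
  (forall u, Cmod (u - c) = r -> f u = g u) ->
  is_circle_integral c r f v -> is_circle_integral c r g v.
Proof.
  intros Hr H HI. eapply is_RInt_ext; [|exact HI].
  intros x _. cbv beta. rewrite H; auto. apply Cmod_circ_sub; auto.
Qed.

Lemma is_circle_integral_plus f g v w : is_circle_integral c r f v ->
  is_circle_integral c r g w -> is_circle_integral c r (fun u => f u + g u)%C (v + w)%C.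
Proof.
  intros H1 H2. eapply is_RInt_ext; [|apply (is_RInt_plus _ _ _ _ _ _ H1 H2)].
  intros; simpl. change (plus ?a ?b) with (Cplus a b). ring.
Qed.

Lemma is_circle_integral_scal f v k : is_circle_integral c r f v ->
  is_circle_integral c r (fun u => k * f u)%C (k * v)%C.
Proof.
  intros H. eapply is_RInt_ext; [|apply (is_RInt_Cmult _ _ _ _ k H)].
  intros; simpl. ring.
Qed.

Lemma is_circle_integral_minus f g v w : is_circle_integral c r f v ->
  is_circle_integral c r g w -> is_circle_integral c r (fun u => f u - g u)%C (v - w)%C.
Proof.
  intros H1 H2. replace (v - w)%C with (v + - (1) * w)%C by ring.
  eapply is_RInt_ext;
    [|apply (is_circle_integral_plus _ _ _ _ H1 (is_circle_integral_scal _ _ (- (1))%C H2))].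
  intros; simpl. ring.
Qed.

Lemma is_circle_integral_antiderivative f F :
  (forall t, is_derive_RC F t (f (circ c r t) * dcirc r t)%C) ->
  (forall t, ex_derive_RC (fun th => f (circ c r th)) t) ->
  is_circle_integral c r f (F (2 * PI)%R - F 0%R)%C.
Proof.
  intros HF Hf. apply is_RInt_derive_RC.
  - pose proof PI_RGT_0; lra.
  - intros; apply HF.
  - intros; apply ex_derive_RC_mult; [apply Hf|apply ex_derive_RC_dcirc].
Qed.

Lemma is_derive_RC_circ_sub a t : is_derive_RC (fun th => circ c r th - a)%C t (dcirc r t).
Proof.
  eapply is_derive_RC_eq.
  - apply (is_derive_RC_minus (circ c r) (fun _ => a)); [apply is_derive_RC_circ|apply is_derive_RC_const].
  - ring.
Qed.

Lemma is_circle_integral_pow a n : is_circle_integral c r (fun u => Cpow (u - a) n) 0%C.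
Proof.
  set (F := fun th => (/ RtoC (INR (S n)) * Cpow (circ c r th - a) (S n))%C).
  assert (Hn : RtoC (INR (S n)) <> 0%C) by (apply RtoC_neq_0, not_0_INR; lia).
  eapply is_circle_integral_eq; [apply (is_circle_integral_antiderivative _ F)|].
  - intros t. eapply is_derive_RC_eq.
    + apply is_derive_RC_scal, is_derive_RC_pow, is_derive_RC_circ_sub.
    + cbv beta. field. exact Hn.
  - intros t. destruct n as [|n].
    + exists 0%C. apply (is_derive_RC_ext (fun _ => 1%C)); [reflexivity|apply is_derive_RC_const].
    + eexists. apply is_derive_RC_pow, is_derive_RC_circ_sub.
  - unfold F. rewrite circ_2PI. ring.
Qed.

Lemma is_circle_integral_inv_pow a n : (Cmod (a - c) < r)%R ->
  is_circle_integral c r (fun u => / Cpow (u - a) (S (S n)))%C 0%C.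
Proof.
  intros Ha.
  assert (Hr : 0 <= r) by (pose proof (Cmod_ge_0 (a - c)); lra).
  assert (Hne : forall t, (circ c r t - a)%C <> 0%C)
    by (intros t; apply Cminus_eq_contra, (circ_neq_inside _ _ _ _ Ha), Cmod_circ_sub, Hr).
  assert (Hn : RtoC (INR (S n)) <> 0%C) by (apply RtoC_neq_0, not_0_INR; lia).
  set (F := fun th => (- / RtoC (INR (S n)) * / Cpow (circ c r th - a) (S n))%C).
  eapply is_circle_integral_eq; [apply (is_circle_integral_antiderivative _ F)|].
  - intros t. eapply is_derive_RC_eq.
    + apply is_derive_RC_scal, is_derive_RC_inv;
        [apply is_derive_RC_pow, is_derive_RC_circ_sub|apply Cpow_nz, Hne].
    + pose proof (Cpow_nz _ n (Hne t)). cbv beta. simpl. field. auto.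
  - intros t. eexists. apply is_derive_RC_inv;
      [apply is_derive_RC_pow, is_derive_RC_circ_sub|apply Cpow_nz, Hne].
  - unfold F. rewrite circ_2PI. ring.
Qed.

End CircleIntegral.

Lemma Cmod_lt_sum_sqr (z : C) (r : R) : (Cmod z < r)%R -> (fst z ^ 2 + snd z ^ 2 < r ^ 2)%R.
Proof.
  unfold Cmod. intros H.
  assert (Hq : (0 <= fst z ^ 2 + snd z ^ 2)%R) by (apply Rplus_le_le_0_compat; apply pow2_ge_0).
  pose proof (sqrt_sqrt _ Hq). pose proof (sqrt_pos (fst z ^ 2 + snd z ^ 2)). nra.
Qed.

Lemma rotated_circle_sub_re_pos (p1 p2 r s : R) : (p1 ^ 2 + p2 ^ 2 < r ^ 2)%R -> (0 < r)%R ->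
  (0 < (r * cos s - p1) * cos s + (r * sin s - p2) * sin s)%R.
Proof.
  intros Hp Hr. pose proof (sin2_cos2 s) as E. unfold Rsqr in E.
  assert (Hcs : ((p1 * cos s + p2 * sin s) ^ 2 < r ^ 2)%R).
  { assert (0 <= (p1 * sin s - p2 * cos s) ^ 2)%R by apply pow2_ge_0.
    assert (((p1 * cos s + p2 * sin s) ^ 2 + (p1 * sin s - p2 * cos s) ^ 2
             = (p1 ^ 2 + p2 ^ 2) * (sin s * sin s + cos s * cos s))%R) by ring.
    nra. }
  assert (p1 * cos s + p2 * sin s < r)%R.
  { apply Rnot_le_lt; intro Hle. assert (r ^ 2 <= (p1 * cos s + p2 * sin s) ^ 2)%R
      by (apply pow_incr; lra). lra. }
  replace ((r * cos s - p1) * cos s + (r * sin s - p2) * sin s)%R with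
    (r * (sin s * sin s + cos s * cos s) - (p1 * cos s + p2 * sin s))%R by ring.
  rewrite E. lra.
Qed.

(** The antiderivative is a branch of log (circ c r th - a) that is continuous in th:
    with (X, Y) = circ c r th - a, its argument is th + atan (B / A) where
    A + i B = (X + i Y) e^{-i th}, and A > 0 because a lies inside the circle. *)
Lemma is_circle_integral_inv c r a : (Cmod (a - c) < r)%R ->
  is_circle_integral c r (fun u => / (u - a))%C two_pi_i.
Proof.
  intros Ha.
  assert (Hne : forall t, (circ c r t - a)%C <> 0%C).
  { assert (0 <= r) by (pose proof (Cmod_ge_0 (a - c)); lra).
    intros t; apply Cminus_eq_contra, (circ_neq_inside _ _ _ _ Ha), Cmod_circ_sub; auto. }
  destruct c as [c1 c2], a as [a1 a2].
  pose proof (Cmod_lt_sum_sqr _ _ Ha) as Hp. cbn [fst snd Cminus Cplus Copp] in Hp.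
  assert (Hr : (0 < r)%R) by (pose proof (Cmod_ge_0 ((a1,a2) - (c1,c2))%C); lra).
  set (p1 := (a1 + - c1)%R) in *. set (p2 := (a2 + - c2)%R) in *.
  set (X := fun s => (r * cos s - p1)%R).
  set (Y := fun s => (r * sin s - p2)%R).
  set (A := fun s => (X s * cos s + Y s * sin s)%R).
  set (B := fun s => (Y s * cos s - X s * sin s)%R).
  assert (HA : forall s, (0 < A s)%R) by (intros s; apply rotated_circle_sub_re_pos; lra).
  assert (HN : forall s, (0 < X s ^ 2 + Y s ^ 2)%R).
  { intros s. pose proof (HA s). unfold A in *.
    destruct (Req_dec (X s) 0) as [E|E].
    - rewrite E in *. assert (Y s <> 0)%R by (intro; subst; nra). nra.
    - nra. }
  set (F := fun s => (ln (X s ^ 2 + Y s ^ 2) / 2, s + atan (B s / A s))%R).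
  eapply is_circle_integral_eq; [apply (is_circle_integral_antiderivative _ _ _ F)|].
  - intros t. pose proof (HN t) as HNt. pose proof (HA t) as HAt. split.
    + apply (is_derive_Rext (fun s => ln (X s ^ 2 + Y s ^ 2) / 2)%R); [reflexivity|].
      unfold X, Y in *. auto_derive; [lra|].
      unfold circ, dcirc, Cinv, Cmult, Cminus, Cplus, Copp, RtoC. cbn [fst snd].
      replace (c1 + (r * cos t - 0 * sin t) + - a1)%R with (r * cos t - p1)%R by (unfold p1; ring).
      replace (c2 + (r * sin t + 0 * cos t) + - a2)%R with (r * sin t - p2)%R by (unfold p2; ring).
      field. lra.
    + apply (is_derive_Rext (fun s => s + atan (B s / A s))%R); [reflexivity|].
      unfold B, A, X, Y in *. auto_derive; [lra|].
      unfold circ, dcirc, Cinv, Cmult, Cminus, Cplus, Copp, RtoC. cbn [fst snd].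
      replace (c1 + (r * cos t - 0 * sin t) + - a1)%R with (r * cos t - p1)%R by (unfold p1; ring).
      replace (c2 + (r * sin t + 0 * cos t) + - a2)%R with (r * sin t - p2)%R by (unfold p2; ring).
      assert (L : forall x y, (0 < x -> x*x + y*y <> 0)%R) by (intros; nra).
      field. split; [lra | split; [lra|]]. apply L. lra.
  - intros t. eexists. apply is_derive_RC_inv; [apply is_derive_RC_circ_sub|apply Hne].
  - unfold F, A, B, X, Y, two_pi_i. rewrite cos_2PI, sin_2PI, cos_0, sin_0.
    unfold Cminus, Cplus, Copp; cbn [fst snd]. f_equal; ring.
Qed.

Fixpoint Csum (f : nat -> C) (n : nat) : C :=
  match n with O => 0%C | S n' => (Csum f n' + f n')%C end.

Lemma Csum_ext f g n : (forall k, (k < n)%nat -> f k = g k) -> Csum f n = Csum g n.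
Proof. induction n; intros H; simpl; auto. rewrite IHn, H; auto; intros; apply H; lia. Qed.

Lemma Csum_mult_l f n k : (k * Csum f n)%C = Csum (fun i => k * f i)%C n.
Proof. induction n; simpl; [ring|]. rewrite <- IHn. ring. Qed.

Lemma Csum_mult_r f n k : (Csum f n * k)%C = Csum (fun i => f i * k)%C n.
Proof. induction n; simpl; [ring|]. rewrite <- IHn. ring. Qed.

Inductive is_Cpoly : (C -> C) -> Prop :=
| Cpoly_const k : is_Cpoly (fun _ => k)
| Cpoly_plus f g : is_Cpoly f -> is_Cpoly g -> is_Cpoly (fun u => f u + g u)%C
| Cpoly_scal k f : is_Cpoly f -> is_Cpoly (fun u => k * f u)%C
| Cpoly_X f : is_Cpoly f -> is_Cpoly (fun u => u * f u)%C.

Lemma is_Cpoly_ext f g : (forall u, f u = g u) -> is_Cpoly f -> is_Cpoly g.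
Proof. intros H; replace g with f; auto. apply functional_extensionality; auto. Qed.

Lemma Cpoly_factor f x : is_Cpoly f ->
  exists g, is_Cpoly g /\ forall u, (f u - f x = (u - x) * g u)%C.
Proof.
  intros H; induction H as [k|f g _ [g1 [P1 E1]] _ [g2 [P2 E2]]|k f _ [g1 [P1 E1]]|f Pf [g1 [P1 E1]]].
  - exists (fun _ => 0%C); split; [constructor|]. intros; ring.
  - exists (fun u => g1 u + g2 u)%C; split; [constructor; auto|].
    intros u. rewrite Cmult_plus_distr_l, <- E1, <- E2. ring.
  - exists (fun u => k * g1 u)%C; split; [constructor; auto|].
    intros u. replace ((u - x) * (k * g1 u))%C with (k * ((u - x) * g1 u))%C by ring.
    rewrite <- E1. ring.
  - exists (fun u => f u + x * g1 u)%C; split; [apply Cpoly_plus; [|apply Cpoly_scal]; auto|].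
    intros u. replace ((u - x) * (f u + x * g1 u))%C
      with ((u - x) * f u + x * ((u - x) * g1 u))%C by ring.
    rewrite <- E1. ring.
Qed.

Section CircleIntegralPoly.

Variables (c : C) (r : R).
Hypothesis (Hr : 0 <= r).

Lemma is_circle_integral_Cpoly f : is_Cpoly f -> is_circle_integral c r f 0%C.
Proof.
  intros Hf.
  enough (H : forall n, is_circle_integral c r (fun u => Cpow u n * f u)%C 0%C).
  { eapply is_circle_integral_ext; [auto| |apply (H 0%nat)]. intros; cbv beta; simpl; ring. }
  induction Hf as [k|f g _ IHf _ IHg|k f _ IHf|f _ IHf]; intros n.
  - eapply is_circle_integral_eq;
      [eapply is_circle_integral_ext; [auto| |apply (is_circle_integral_scal c r _ _ k
         (is_circle_integral_pow c r 0%C n))]|].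
    + intros u _; cbv beta. replace (u - 0)%C with u by ring. ring.
    + ring.
  - eapply is_circle_integral_eq;
      [eapply is_circle_integral_ext; [auto| |apply (is_circle_integral_plus _ _ _ _ _ _ (IHf n) (IHg n))]|].
    + intros u _; cbv beta. ring.
    + ring.
  - eapply is_circle_integral_eq;
      [eapply is_circle_integral_ext; [auto| |apply (is_circle_integral_scal _ _ _ _ k (IHf n))]|].
    + intros u _; cbv beta. ring.
    + ring.
  - eapply is_circle_integral_ext; [auto| |apply (IHf (S n))].
    intros u _; cbv beta. simpl. ring.
Qed.

Lemma is_circle_integral_sum (f : nat -> C -> C) (v : nat -> C) n :
  (forall k, (k < n)%nat -> is_circle_integral c r (f k) (v k)) ->
  is_circle_integral c r (fun u => Csum (fun k => f k u) n) (Csum v n).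
Proof.
  induction n; intros H; simpl.
  - apply is_circle_integral_Cpoly, Cpoly_const.
  - apply is_circle_integral_plus; [apply IHn; intros; apply H; lia|apply H; lia].
Qed.

Lemma is_circle_integral_Cpoly_div f x : is_Cpoly f -> (Cmod (x - c) < r)%R ->
  is_circle_integral c r (fun u => f u / (x - u))%C (- two_pi_i * f x)%C.
Proof.
  intros Hf Hx. destruct (Cpoly_factor f x Hf) as [g [Pg Eg]].
  eapply is_circle_integral_eq; [eapply is_circle_integral_ext; [auto| |
    apply (is_circle_integral_minus _ _ _ _ _ _
      (is_circle_integral_scal _ _ _ _ (- f x)%C (is_circle_integral_inv c r x Hx))
      (is_circle_integral_Cpoly g Pg))]|].
  - intros u Hu; cbv beta. pose proof (circ_neq_inside _ _ _ _ Hx Hu) as Hne.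
    replace (f u) with (f x + (u - x) * g u)%C by (rewrite <- Eg; ring).
    field. split; apply Cminus_eq_contra; auto.
  - ring.
Qed.

Lemma is_circle_integral_inv_pow_div x a m : (Cmod (x - c) < r)%R -> (Cmod (a - c) < r)%R ->
  x <> a -> is_circle_integral c r (fun u => / Cpow (u - a) (S m) / (x - u))%C 0%C.
Proof.
  intros Hx Ha Hxa. assert (Hxa' : (x - a)%C <> 0%C) by (apply Cminus_eq_contra; auto).
  induction m as [|m IH].
  - eapply is_circle_integral_eq; [eapply is_circle_integral_ext; [auto| |
      apply (is_circle_integral_scal _ _ _ _ (/ (x - a))%C (is_circle_integral_minus _ _ _ _ _ _
        (is_circle_integral_inv c r a Ha) (is_circle_integral_inv c r x Hx)))]|].
    + intros u Hu; cbv beta.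
      pose proof (circ_neq_inside _ _ _ _ Hx Hu). pose proof (circ_neq_inside _ _ _ _ Ha Hu).
      simpl. field. repeat split; try apply Cminus_eq_contra; auto.
    + field. auto.
  - eapply is_circle_integral_eq; [eapply is_circle_integral_ext; [auto| |
      apply (is_circle_integral_scal _ _ _ _ (/ (x - a))%C (is_circle_integral_plus _ _ _ _ _ _
        (is_circle_integral_inv_pow c r a m Ha) IH))]|].
    + intros u Hu; cbv beta.
      pose proof (circ_neq_inside _ _ _ _ Hx Hu). pose proof (circ_neq_inside _ _ _ _ Ha Hu).
      assert ((u - a)%C <> 0%C) by (apply Cminus_eq_contra; auto).
      pose proof (Cpow_nz _ m H1). simpl. field. repeat split; try apply Cminus_eq_contra; auto.
    + field. auto.
Qed.

End CircleIntegralPoly.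

Lemma J_0 a z : J a 0 z = 1%C.
Proof. reflexivity. Qed.

Lemma J_mhalf_1 z : J mhalf 1 z = z.
Proof. reflexivity. Qed.

Lemma J_phalf_1 z : J phalf 1 z = (2 * z + 1)%C.
Proof. reflexivity. Qed.

Lemma J_SS a s z : J a (S (S s)) z = (2 * z * J a (S s) z - J a s z)%C.
Proof.
  unfold J. change (Jpair a (S (S s)) z) with (let (p, q) := Jpair a (S s) z in (q, 2 * z * q - p)%C).
  simpl. destruct (Jpair a s z) as [p q]. reflexivity.
Qed.

Lemma three_term_rec_zero (z : C) (e : nat -> C) : e 0%nat = 0%C -> e 1%nat = 0%C ->
  (forall s, e (S (S s)) = (2 * z * e (S s) - e s)%C) -> forall s, e s = 0%C.
Proof.
  intros H0 H1 HS.
  assert (H : forall s, e s = 0%C /\ e (S s) = 0%C).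
  { induction s as [|s [A B]]; auto. split; auto. rewrite HS, A, B. ring. }
  intros s; apply H.
Qed.

Lemma J_phalf_S_sub s z : (J phalf (S s) z - J phalf s z = 2 * J mhalf (S s) z)%C.
Proof.
  apply Ceq_minus. revert s.
  apply (three_term_rec_zero z (fun s => J phalf (S s) z - J phalf s z - 2 * J mhalf (S s) z)%C).
  - rewrite J_phalf_1, J_mhalf_1, J_0. ring.
  - rewrite !J_SS, J_phalf_1, J_mhalf_1, !J_0. ring.
  - intros s. rewrite !(J_SS _ (S s)), !(J_SS _ s). ring.
Qed.

Lemma J_mhalf_S_sub s z : (J mhalf (S s) z - J mhalf s z = (z - 1) * J phalf s z)%C.
Proof.
  apply Ceq_minus. revert s.
  apply (three_term_rec_zero z (fun s => J mhalf (S s) z - J mhalf s z - (z - 1) * J phalf s z)%C).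
  - rewrite J_mhalf_1, !J_0. ring.
  - rewrite !J_SS, J_phalf_1, J_mhalf_1, !J_0. ring.
  - intros s. rewrite !(J_SS _ (S s)), !(J_SS _ s). ring.
Qed.

Lemma Tm_of_le s k : (k <= s)%nat -> Tm s k = if Nat.eqb k 0 then 1%R else 2%R.
Proof.
  intros H. unfold Tm. destruct (Nat.ltb s k) eqn:E; [apply Nat.ltb_lt in E; lia|reflexivity].
Qed.

Lemma J_phalf_expand s z : J phalf s z = Csum (fun k => RtoC (Tm s k) * J mhalf k z)%C (S s).
Proof.
  induction s as [|s IH].
  - simpl. unfold Tm; simpl. rewrite !J_0. ring.
  - change (Csum ?f (S (S s))) with (Csum f (S s) + f (S s))%C.
    rewrite (Csum_ext _ (fun k => RtoC (Tm s k) * J mhalf k z)%C).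
    + rewrite <- IH, Tm_of_le by lia. simpl Nat.eqb. cbv iota.
      rewrite <- (J_phalf_S_sub s z). ring.
    + intros k Hk. rewrite !Tm_of_le by lia. reflexivity.
Qed.

Lemma J_mhalf_expand s z : J mhalf s z = (1 + (z - 1) * Csum (fun k => J phalf k z) s)%C.
Proof.
  induction s as [|s IH]; simpl.
  - rewrite J_0. ring.
  - rewrite Cmult_plus_distr_l, Cplus_assoc, <- IH, <- J_mhalf_S_sub. ring.
Qed.

Lemma J_Cpoly a s : is_Cpoly (J a s).
Proof.
  revert s.
  enough (H : forall s, is_Cpoly (J a s) /\ is_Cpoly (J a (S s))) by (intros s; exact (proj1 (H s))).
  intros s; induction s as [|s [A B]]; split; auto.
  - exact (Cpoly_const 1%C).
  - destruct a.
    + apply (is_Cpoly_ext (fun u => u * 1)%C); [intros; rewrite J_mhalf_1; ring|].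
      apply Cpoly_X, Cpoly_const.
    + apply (is_Cpoly_ext (fun u => u * 2 + 1)%C); [intros; rewrite J_phalf_1; ring|].
      apply Cpoly_plus; [apply Cpoly_X|]; apply Cpoly_const.
  - apply (is_Cpoly_ext (fun u => u * (2 * J a (S s) u) + (- (1)) * J a s u)%C).
    + intros; rewrite J_SS. ring.
    + apply Cpoly_plus; [apply Cpoly_X|]; apply Cpoly_scal; auto.
Qed.

Definition Jr (a : half) (s : nat) (x : R) : R := fst (J a s (RtoC x)).

Lemma J_RtoC a s x : J a s (RtoC x) = RtoC (Jr a s x).
Proof.
  unfold Jr. revert s.
  enough (H : forall s, snd (J a s (RtoC x)) = 0%R /\ snd (J a (S s) (RtoC x)) = 0%R).
  { intros s. destruct (H s) as [E _]. destruct (J a s (RtoC x)); simpl in *. subst. reflexivity. }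
  intros s; induction s as [|s [A B]]; split; auto.
  - destruct a; simpl; ring.
  - rewrite J_SS. destruct (J a (S s) (RtoC x)), (J a s (RtoC x)); simpl in *. subst. ring.
Qed.

(** * Finite sums and lower triangular matrices *)

Fixpoint rsum (f : nat -> R) (n : nat) : R :=
  match n with O => 0%R | S n' => (rsum f n' + f n')%R end.

Lemma rsum_ext f g n : (forall k, (k < n)%nat -> f k = g k) -> rsum f n = rsum g n.
Proof. induction n; intros H; simpl; auto. rewrite IHn, H; auto; intros; apply H; lia. Qed.

Lemma rsum_0 n : rsum (fun _ => 0%R) n = 0%R.
Proof. induction n; simpl; [|rewrite IHn]; ring. Qed.

Lemma rsum_plus f g n : rsum (fun k => f k + g k)%R n = (rsum f n + rsum g n)%R.
Proof. induction n; simpl; [|rewrite IHn]; ring. Qed.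

Lemma rsum_minus f g n : rsum (fun k => f k - g k)%R n = (rsum f n - rsum g n)%R.
Proof. induction n; simpl; [|rewrite IHn]; ring. Qed.

Lemma rsum_scal f n a : rsum (fun k => a * f k)%R n = (a * rsum f n)%R.
Proof. induction n; simpl; [|rewrite IHn]; ring. Qed.

Lemma rsum_swap (g : nat -> nat -> R) n m :
  rsum (fun i => rsum (fun j => g i j) m) n = rsum (fun j => rsum (fun i => g i j) n) m.
Proof.
  induction n; simpl.
  - symmetry. apply rsum_0.
  - rewrite IHn, <- rsum_plus. reflexivity.
Qed.

Lemma rsum_vanishing_tail f N n : (forall z, (N <= z)%nat -> f z = 0%R) -> (N <= n)%nat ->
  rsum f n = rsum f N.
Proof. intros H Hn. induction Hn; auto. simpl. rewrite IHHn, H by lia. ring. Qed.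

Lemma rsum_mid_l f s n : (s < n)%nat -> rsum (fun k => mid s k * f k)%R n = f s.
Proof.
  intros H. rewrite (rsum_vanishing_tail _ (S s)); simpl.
  - rewrite (rsum_ext _ (fun _ => 0%R)), rsum_0.
    + unfold mid. rewrite Nat.eqb_refl. ring.
    + intros k Hk. unfold mid. destruct (Nat.eqb_spec s k); [lia|ring].
  - intros z Hz. unfold mid. destruct (Nat.eqb_spec s z); [lia|ring].
  - exact H.
Qed.

Lemma RtoC_rsum f n : RtoC (rsum f n) = Csum (fun k => RtoC (f k)) n.
Proof. induction n; simpl; [|rewrite RtoC_plus, IHn]; reflexivity. Qed.

Lemma Series_finite (f : nat -> R) N : (forall z, (N <= z)%nat -> f z = 0%R) ->
  Series f = rsum f N.
Proof.
  intros H. apply is_series_unique.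
  assert (L : is_lim_seq (sum_n f) (rsum f N)).
  { apply (is_lim_seq_ext_loc (fun _ => rsum f N)); [|apply is_lim_seq_const].
    exists N. intros n Hn. symmetry.
    transitivity (rsum f (S n)).
    - clear. induction n; [rewrite sum_O; simpl; ring|]. rewrite sum_Sn, IHn. reflexivity.
    - apply rsum_vanishing_tail; auto. }
  exact L.
Qed.

Definition lower_triangular (A : mat) : Prop := forall x z, (x < z)%nat -> A x z = 0%R.

Lemma mconv_finite A B x y n : lower_triangular A -> (x < n)%nat ->
  mconv A B x y = rsum (fun z => A x z * B z y)%R n.
Proof.
  intros HA Hn. unfold mconv. rewrite (Series_finite _ (S x)).
  - symmetry. apply rsum_vanishing_tail; auto. intros z Hz. rewrite HA by lia. ring.
  - intros z Hz. rewrite HA by lia. ring.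
Qed.

Lemma lower_triangular_mconv A B : lower_triangular A -> lower_triangular B ->
  lower_triangular (mconv A B).
Proof.
  intros HA HB x z Hxz. rewrite (mconv_finite _ _ _ _ (S x)) by (auto; lia).
  rewrite <- (rsum_0 (S x)). apply rsum_ext; intros k Hk. rewrite HB by lia. ring.
Qed.

Lemma lower_triangular_mid : lower_triangular mid.
Proof. intros x z H. unfold mid. destruct (Nat.eqb_spec x z); [lia|auto]. Qed.

Lemma lower_triangular_Tm : lower_triangular Tm.
Proof. intros x z H. unfold Tm. apply Nat.ltb_lt in H. rewrite H. auto. Qed.

Lemma lower_triangular_phim : lower_triangular phim.
Proof. intros x z H. unfold phim. destruct (Nat.ltb_spec z x); [lia|auto]. Qed.

Lemma lower_triangular_mpow A k : lower_triangular A -> lower_triangular (mpow A k).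
Proof.
  intros HA; induction k; simpl; [apply lower_triangular_mid|apply lower_triangular_mconv; auto].
Qed.

Lemma rsum_mconv A B (Z : nat -> R) s n : lower_triangular A -> lower_triangular B -> (s < n)%nat ->
  rsum (fun k => A s k * rsum (fun j => B k j * Z j) n)%R n =
  rsum (fun j => mconv A B s j * Z j)%R n.
Proof.
  intros HA HB Hn.
  rewrite (rsum_ext (fun j => mconv A B s j * Z j)%R
                    (fun j => rsum (fun k => A s k * B k j * Z j)%R n)).
  - rewrite <- rsum_swap. apply rsum_ext; intros k Hk.
    rewrite <- rsum_scal. apply rsum_ext; intros; ring.
  - intros j Hj. rewrite (mconv_finite _ _ _ _ n), Rmult_comm, <- rsum_scal by auto.
    apply rsum_ext; intros; ring.
Qed.

Lemma mconv_assoc A B C x y : lower_triangular A -> lower_triangular B ->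
  mconv (mconv A B) C x y = mconv A (mconv B C) x y.
Proof.
  intros HA HB.
  rewrite (mconv_finite _ _ _ _ (S x)), (mconv_finite A _ _ _ (S x))
    by auto using lower_triangular_mconv.
  rewrite (rsum_ext (fun z => mconv A B x z * C z y)%R
                    (fun z => rsum (fun k => A x k * B k z * C z y)%R (S x))).
  - rewrite <- rsum_swap. apply rsum_ext; intros k Hk.
    rewrite (mconv_finite _ _ _ _ (S x)), <- rsum_scal by (auto; lia).
    apply rsum_ext; intros; ring.
  - intros z Hz. rewrite (mconv_finite _ _ _ _ (S x)), Rmult_comm, <- rsum_scal by auto.
    apply rsum_ext; intros; ring.
Qed.

Lemma mconv_mid_l A x y : lower_triangular A -> mconv mid A x y = A x y.
Proof.
  intros HA. rewrite (mconv_finite _ _ _ _ (S x)) by auto using lower_triangular_mid.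
  apply (rsum_mid_l (fun z => A z y)). lia.
Qed.

Lemma mconv_mid_r A x y : mconv A mid x y = A x y.
Proof.
  unfold mconv. rewrite (Series_finite _ (S y)).
  - rewrite (rsum_ext _ (fun z => mid y z * A x z)).
    + apply rsum_mid_l. lia.
    + intros z _. unfold mid. rewrite Nat.eqb_sym. ring.
  - intros z Hz. unfold mid. destruct (Nat.eqb_spec z y); [lia|ring].
Qed.

Lemma mpow_S_l A k x y : lower_triangular A -> mconv A (mpow A k) x y = mpow A (S k) x y.
Proof.
  intros HA. revert x y. induction k as [|k IH]; intros x y.
  - simpl. rewrite mconv_mid_r, mconv_mid_l; auto.
  - change (mpow A (S (S k))) with (mconv (mpow A (S k)) A).
    change (mpow A (S k)) with (mconv (mpow A k) A) at 1.
    rewrite <- mconv_assoc by auto using lower_triangular_mpow.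
    unfold mconv at 1 3. apply Series_ext. intros n. rewrite IH. reflexivity.
Qed.

Lemma rsum_mpow_iterate (M : mat) (F : nat -> nat -> R) : lower_triangular M ->
  (forall m s n, (s < n)%nat -> F (S m) s = rsum (fun j => M s j * F m j)%R n) ->
  forall m p s n, (s < n)%nat -> F (m + p)%nat s = rsum (fun k => mpow M m s k * F p k)%R n.
Proof.
  intros HM HS m. induction m as [|m IH]; intros p s n Hn.
  - simpl. rewrite rsum_mid_l; auto.
  - simpl (S m + p)%nat. rewrite (HS _ _ n Hn).
    rewrite (rsum_ext _ (fun j => M s j * rsum (fun k => mpow M m j k * F p k) n)%R).
    + rewrite rsum_mconv by auto using lower_triangular_mpow.
      apply rsum_ext; intros k _. rewrite mpow_S_l; auto.
    + intros j Hj. rewrite (IH p j n Hj). reflexivity.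
Qed.

(** * The inner contour integral *)

Definition Tm_apply (f : nat -> R -> R) (s : nat) (x : R) : R :=
  rsum (fun k => Tm s k * f k x)%R (S s).

(** [coefT m s x] and [coefW m s x] are the values at x of the contour integrals of
    J^{(-1/2)}_s(u) (u - 1)^{-m} / (x - u) and J^{(1/2)}_s(u) (u - 1)^{-m} / (x - u),
    divided by -2 pi i. *)
Fixpoint coefT (m : nat) : nat -> R -> R :=
  match m with
  | O => Jr mhalf
  | S m' => fun s x => rsum (fun k => Tm_apply (coefT m') k x) s
  end.

Definition coefW (m : nat) : nat -> R -> R := Tm_apply (coefT m).

Section InnerIntegral.

Variables (c : C) (r : R) (x : R).
Hypotheses (Hin : forall t : R, (-1 <= t <= 1)%R -> (Cmod (RtoC t - c) < r)%R)
  (Hx : (-1 < x < 1)%R).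

Let Hx_in : (Cmod (RtoC x - c) < r)%R.
Proof. apply Hin; lra. Qed.

Let H1_in : (Cmod (1 - c) < r)%R.
Proof. apply (Hin 1%R); lra. Qed.

Let Hr : 0 <= r.
Proof. pose proof (Cmod_ge_0 (1 - c)); lra. Qed.

Let Hx1 : RtoC x <> 1%C.
Proof. intros E. apply (f_equal fst) in E. simpl in E. lra. Qed.

Lemma is_circle_integral_J_phalf_of_mhalf m :
  (forall s, is_circle_integral c r (fun u => J mhalf s u * / Cpow (u - 1) m / (RtoC x - u))%C
                                   (- two_pi_i * RtoC (coefT m s x))%C) ->
  forall s, is_circle_integral c r (fun u => J phalf s u * / Cpow (u - 1) m / (RtoC x - u))%C
                                  (- two_pi_i * RtoC (coefW m s x))%C.
Proof.
  intros HT s.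
  eapply is_circle_integral_eq; [eapply is_circle_integral_ext; [apply Hr| |
    apply (is_circle_integral_sum c r Hr
      (fun k u => RtoC (Tm s k) * (J mhalf k u * / Cpow (u - 1) m / (RtoC x - u)))%C
      (fun k => RtoC (Tm s k) * (- two_pi_i * RtoC (coefT m k x)))%C (S s))]|].
  - intros u _. cbv beta. rewrite J_phalf_expand. unfold Cdiv. rewrite !Csum_mult_r.
    apply Csum_ext. intros; ring.
  - intros k _. apply is_circle_integral_scal, HT.
  - unfold coefW, Tm_apply. rewrite RtoC_rsum, Csum_mult_l. apply Csum_ext. intros.
    rewrite RtoC_mult. ring.
Qed.

Lemma is_circle_integral_J_mhalf_S m :
  (forall s, is_circle_integral c r (fun u => J phalf s u * / Cpow (u - 1) m / (RtoC x - u))%C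
                                   (- two_pi_i * RtoC (coefW m s x))%C) ->
  forall s, is_circle_integral c r (fun u => J mhalf s u * / Cpow (u - 1) (S m) / (RtoC x - u))%C
                                  (- two_pi_i * RtoC (coefT (S m) s x))%C.
Proof.
  intros HW s.
  eapply is_circle_integral_eq; [eapply is_circle_integral_ext; [apply Hr| |
    apply (is_circle_integral_plus _ _ _ _ _ _
      (is_circle_integral_inv_pow_div c r Hr (RtoC x) 1 m Hx_in H1_in Hx1)
      (is_circle_integral_sum c r Hr (fun k u => J phalf k u * / Cpow (u - 1) m / (RtoC x - u))%C
         (fun k => - two_pi_i * RtoC (coefW m k x))%C s (fun k _ => HW k)))]|].
  - intros u Hu. cbv beta. rewrite J_mhalf_expand.
    pose proof (circ_neq_inside _ _ _ _ Hx_in Hu). pose proof (circ_neq_inside _ _ _ _ H1_in Hu).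
    assert (Hu1 : (u - 1)%C <> 0%C) by (apply Cminus_eq_contra; auto).
    pose proof (Cpow_nz _ m Hu1).
    rewrite <- (Csum_ext (fun k => J phalf k u * (/ Cpow (u - 1) m / (RtoC x - u)))%C)
      by (intros; unfold Cdiv; ring).
    rewrite <- Csum_mult_r. simpl.
    field. repeat split; try apply Cminus_eq_contra; auto.
  - simpl coefT. rewrite RtoC_rsum, Csum_mult_l, Cplus_0_l. reflexivity.
Qed.

Lemma is_circle_integral_J_coef m :
  (forall s, is_circle_integral c r (fun u => J mhalf s u * / Cpow (u - 1) m / (RtoC x - u))%C
                                   (- two_pi_i * RtoC (coefT m s x))%C) /\
  (forall s, is_circle_integral c r (fun u => J phalf s u * / Cpow (u - 1) m / (RtoC x - u))%C
                                   (- two_pi_i * RtoC (coefW m s x))%C).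
Proof.
  enough (HT : forall s, is_circle_integral c r
    (fun u => J mhalf s u * / Cpow (u - 1) m / (RtoC x - u))%C (- two_pi_i * RtoC (coefT m s x))%C)
    by (split; [|apply is_circle_integral_J_phalf_of_mhalf]; exact HT).
  induction m as [|m IH]; intros s.
  - eapply is_circle_integral_eq; [eapply is_circle_integral_ext; [apply Hr| |
      apply (is_circle_integral_Cpoly_div c r Hr (J mhalf s) (RtoC x) (J_Cpoly _ _) Hx_in)]|].
    + intros u Hu. cbv beta. simpl. field.
      apply Cminus_eq_contra. intros E. apply (circ_neq_inside _ _ _ _ Hx_in Hu). auto.
    + change (coefT 0 s x) with (Jr mhalf s x). rewrite J_RtoC. reflexivity.
  - apply is_circle_integral_J_mhalf_S, is_circle_integral_J_phalf_of_mhalf, IH.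
Qed.

End InnerIntegral.

(** * The coefficients as matrix products *)

Lemma Tm_apply_finite f s x n : (s < n)%nat ->
  Tm_apply f s x = rsum (fun k => Tm s k * f k x)%R n.
Proof.
  intros H. symmetry. apply rsum_vanishing_tail; [|lia].
  intros; rewrite lower_triangular_Tm by lia; ring.
Qed.

Lemma rsum_phim (f : nat -> R) s n : (s <= n)%nat -> rsum f s = rsum (fun k => phim s k * f k)%R n.
Proof.
  intros H. rewrite (rsum_vanishing_tail (fun k => phim s k * f k)%R s n); auto.
  - apply rsum_ext; intros k Hk. unfold phim. destruct (Nat.ltb_spec k s); [ring|lia].
  - intros z Hz. unfold phim. destruct (Nat.ltb_spec z s); [lia|ring].
Qed.

Lemma coefT_S m s n x : (s < n)%nat ->
  coefT (S m) s x = rsum (fun j => mconv phim Tm s j * coefT m j x)%R n.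
Proof.
  intros H. simpl coefT. rewrite (rsum_phim _ s n) by lia.
  rewrite (rsum_ext _ (fun k => phim s k * rsum (fun j => Tm k j * coefT m j x) n)%R).
  - apply rsum_mconv; auto using lower_triangular_phim, lower_triangular_Tm.
  - intros k Hk. rewrite (Tm_apply_finite _ _ _ n); auto.
Qed.

Lemma coefW_S m s n x : (s < n)%nat ->
  coefW (S m) s x = rsum (fun j => mconv Tm phim s j * coefW m j x)%R n.
Proof.
  intros H. unfold coefW at 1. rewrite (Tm_apply_finite _ _ _ n H).
  rewrite (rsum_ext _ (fun k => Tm s k * rsum (fun j => phim k j * coefW m j x) n)%R).
  - apply rsum_mconv; auto using lower_triangular_phim, lower_triangular_Tm.
  - intros k Hk. simpl coefT. rewrite (rsum_phim _ k n) by lia. reflexivity.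
Qed.

Lemma Jr_phalf_expand s x n : (s < n)%nat ->
  Jr phalf s x = rsum (fun k => Tm s k * Jr mhalf k x)%R n.
Proof.
  intros H. apply RtoC_inj. rewrite <- J_RtoC, J_phalf_expand.
  rewrite <- (Tm_apply_finite (Jr mhalf) s x n H). unfold Tm_apply.
  rewrite RtoC_rsum. apply Csum_ext. intros k _. rewrite RtoC_mult, J_RtoC. reflexivity.
Qed.

Lemma coefW_0 s x : coefW 0 s x = Jr phalf s x.
Proof. unfold coefW. rewrite (Tm_apply_finite _ _ _ (S s)), (Jr_phalf_expand _ _ (S s)); auto. Qed.

Lemma lower_triangular_phim_Tm : lower_triangular (mconv phim Tm).
Proof. apply lower_triangular_mconv; [apply lower_triangular_phim|apply lower_triangular_Tm]. Qed.

Lemma lower_triangular_Tm_phim : lower_triangular (mconv Tm phim).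
Proof. apply lower_triangular_mconv; [apply lower_triangular_Tm|apply lower_triangular_phim]. Qed.

Lemma coefT_expand m s x n : (s < n)%nat ->
  coefT m s x = rsum (fun k => mpow (mconv phim Tm) m s k * Jr mhalf k x)%R n.
Proof.
  intros H. rewrite <- (Nat.add_0_r m) at 1.
  apply (rsum_mpow_iterate (mconv phim Tm) (fun m s => coefT m s x)); auto using lower_triangular_phim_Tm.
  intros; apply coefT_S; auto.
Qed.

Lemma coefT_S_expand m s x n : (s < n)%nat ->
  coefT (S m) s x = rsum (fun k => mconv (mpow (mconv phim Tm) m) phim s k * Jr phalf k x)%R n.
Proof.
  intros H. rewrite <- Nat.add_1_r.
  rewrite (rsum_mpow_iterate (mconv phim Tm) (fun m s => coefT m s x)) with (n := n);
    auto using lower_triangular_phim_Tm; [|intros; apply coefT_S; auto].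
  rewrite <- rsum_mconv by auto using lower_triangular_mpow, lower_triangular_phim_Tm,
    lower_triangular_phim.
  apply rsum_ext; intros k Hk. simpl coefT. rewrite (rsum_phim _ k n) by lia.
  f_equal. apply rsum_ext; intros j _. rewrite <- coefW_0. reflexivity.
Qed.

Lemma coefW_expand m s x n : (s < n)%nat ->
  coefW m s x = rsum (fun k => mpow (mconv Tm phim) m s k * Jr phalf k x)%R n.
Proof.
  intros H. rewrite <- (Nat.add_0_r m) at 1.
  rewrite (rsum_mpow_iterate (mconv Tm phim) (fun m s => coefW m s x)) with (n := n);
    auto using lower_triangular_Tm_phim; [|intros; apply coefW_S; auto].
  apply rsum_ext; intros; rewrite coefW_0; reflexivity.
Qed.

Lemma coefW_expand_mhalf m s x n : (s < n)%nat ->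
  coefW m s x = rsum (fun k => mconv (mpow (mconv Tm phim) m) Tm s k * Jr mhalf k x)%R n.
Proof.
  intros H. rewrite (coefW_expand m s x n H).
  rewrite <- rsum_mconv by auto using lower_triangular_mpow, lower_triangular_Tm_phim,
    lower_triangular_Tm.
  apply rsum_ext; intros k Hk. rewrite (Jr_phalf_expand k x n Hk). reflexivity.
Qed.

(** * Improper integrals over (-1, 1) by the substitution x = cos t *)

Lemma interior_eventually :
  filter_prod (at_right (-1)) (at_left 1)
    (fun ab : R * R => (-1 < fst ab < 1)%R /\ (-1 < snd ab < 1)%R).
Proof.
  assert (H1 : (0 < 1)%R) by lra.
  apply (Filter_prod _ _ _ (fun a => (-1 < a < 1)%R) (fun b => (-1 < b < 1)%R));
    [exists (mkposreal _ H1)..|intros; simpl; auto];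
    intros y Hy Hy1; simpl in Hy;
    unfold ball in Hy; simpl in Hy; unfold AbsRing_ball, abs, minus, plus, opp in Hy; simpl in Hy;
    apply Rabs_def2 in Hy; lra.
Qed.

Lemma in_interval_interior a b x : (-1 < a < 1)%R -> (-1 < b < 1)%R ->
  (Rmin a b <= x <= Rmax a b)%R -> (-1 < x < 1)%R.
Proof. intros Ha Hb H. unfold Rmin, Rmax in H. destruct (Rle_dec a b); lra. Qed.

Lemma is_derive_acos x : (-1 < x < 1)%R -> is_derive acos x (-1 / sqrt (1 - x ^ 2))%R.
Proof.
  intros H. apply is_derive_Reals.
  replace (x ^ 2)%R with (Rsqr x) by (unfold Rsqr; ring).
  apply (derive_pt_eq_1 acos x _ (derivable_pt_acos x H)), derive_pt_acos.
Qed.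

Lemma sqrt_1_minus_sqr_pos x : (-1 < x < 1)%R -> (0 < sqrt (1 - x ^ 2))%R.
Proof. intros H. apply sqrt_lt_R0. nra. Qed.

Lemma filterlim_acos_at_left_1 : filterlim acos (at_left 1) (locally 0%R).
Proof.
  apply filterlim_locally. intros eps.
  set (e := Rmin eps (PI / 2)).
  assert (He : (0 < e <= PI / 2)%R).
  { pose proof PI_RGT_0. pose proof (cond_pos eps).
    unfold e, Rmin; destruct (Rle_dec eps (PI / 2)); lra. }
  assert (Hc : (cos e < 1)%R) by (rewrite <- cos_0; apply cos_decreasing_1; lra).
  assert (Hd : (0 < 1 - cos e)%R) by lra.
  exists (mkposreal _ Hd). intros y Hy Hy1. simpl in Hy.
  unfold ball in Hy; simpl in Hy; unfold AbsRing_ball, abs, minus, plus, opp in Hy; simpl in Hy.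
  unfold ball; simpl; unfold AbsRing_ball, abs, minus, plus, opp; simpl.
  apply Rabs_def2 in Hy.
  assert (Hy' : (-1 <= y <= 1)%R) by (pose proof (COS_bound e); lra).
  pose proof (acos_bound y).
  assert (acos y < e)%R.
  { apply Rnot_le_lt. intros Hle. destruct (Req_dec (acos y) e) as [E|E].
    - rewrite <- E, cos_acos in Hy; lra.
    - assert (cos (acos y) < cos e)%R by (apply cos_decreasing_1; lra).
      rewrite cos_acos in *; lra. }
  rewrite Rabs_right by lra. assert (e <= eps)%R by apply Rmin_l. lra.
Qed.

Lemma filterlim_acos_at_right_m1 : filterlim acos (at_right (-1)) (locally PI).
Proof.
  apply (filterlim_ext (fun y => PI - acos (- y))%R).
  { intros y. rewrite acos_opp. ring. }
  apply (filterlim_comp _ _ _ (fun y => acos (- y)) (fun v => PI - v)%R _ (locally 0%R)).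
  - apply (filterlim_comp _ _ _ Ropp acos _ (at_left 1)); [|apply filterlim_acos_at_left_1].
    pose proof (filterlim_Ropp_right (-1)) as H. replace (- -1)%R with 1%R in H by ring. exact H.
  - replace (locally PI) with (locally (PI - 0)%R) by (f_equal; ring).
    apply (ex_derive_continuous (K := R_AbsRing) (V := R_NormedModule)). auto_derive. auto.
Qed.

Lemma is_RInt_RtoC (h : R -> R) a b v : is_RInt h a b v ->
  @is_RInt C_R_NormedModule (fun x => RtoC (h x)) a b (RtoC v).
Proof.
  intros H. apply (is_RInt_fct_extend_pair (U := R_NormedModule) (V := R_NormedModule)); [exact H|].
  pose proof (is_RInt_const (V := R_NormedModule) a b 0%R) as H0.
  change (scal (b - a) 0%R) with ((b - a) * 0)%R in H0. rewrite Rmult_0_r in H0. exact H0.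
Qed.

Lemma filterlim_Cmult_RtoC (K : C) y0 :
  filterlim (fun y : R => (K * RtoC y)%C) (locally y0) (locally (K * RtoC y0)%C).
Proof.
  assert (E : forall y : R, @scal R_Ring C_R_ModuleSpace y K = (K * RtoC y)%C).
  { intros y. destruct K. unfold scal; simpl. unfold prod_scal; simpl. unfold RtoC, Cmult; simpl.
    unfold mult; simpl. change (scal y ?u) with (y * u)%R. f_equal; ring. }
  assert (H : continuous (fun y : R => @scal R_Ring C_R_ModuleSpace y K) y0).
  { apply (ex_derive_continuous (K := R_AbsRing) (V := C_R_NormedModule)).
    exists (scal 1%R K). apply (is_derive_scal_l (K := R_AbsRing) (V := C_R_NormedModule) (fun y => y)).
    apply (is_derive_id (K := R_AbsRing)). }
  unfold continuous in H. rewrite E in H.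
  eapply filterlim_ext; [|exact H]. intros; apply E.
Qed.

Section AcosSubstitution.

Variables (Psi dPsi h : R -> R).
Hypotheses (HPsi : forall t, is_derive Psi t (dPsi t)) (HdPsi : forall t, ex_derive dPsi t)
  (Hh : forall x, (-1 < x < 1)%R -> h x = (dPsi (acos x) / sqrt (1 - x ^ 2))%R).

Lemma is_RInt_acos_subst a b : (-1 < a < 1)%R -> (-1 < b < 1)%R ->
  is_RInt h a b (Psi (acos a) - Psi (acos b))%R.
Proof.
  intros Ha Hb.
  replace (Psi (acos a) - Psi (acos b))%R with
    (@minus R_AbelianGroup (- Psi (acos b)) (- Psi (acos a)))%R
    by (unfold minus, plus, opp; simpl; ring).
  eapply is_RInt_ext; [|apply (is_RInt_derive (V := R_CompleteNormedModule)
    (fun y => - Psi (acos y))%R (fun y => dPsi (acos y) / sqrt (1 - y ^ 2))%R)].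
  - intros x Hx. symmetry. apply Hh, (in_interval_interior a b x Ha Hb). lra.
  - intros x Hx. pose proof (in_interval_interior a b x Ha Hb Hx) as Hx'.
    pose proof (sqrt_1_minus_sqr_pos x Hx').
    replace (dPsi (acos x) / sqrt (1 - x ^ 2))%R with (- ((-1 / sqrt (1 - x ^ 2)) * dPsi (acos x)))%R
      by (field; lra).
    apply is_derive_Ropp.
    apply (is_derive_comp (K := R_AbsRing) (V := R_NormedModule) Psi acos);
      [apply HPsi|apply is_derive_acos; auto].
  - intros x Hx. pose proof (in_interval_interior a b x Ha Hb Hx) as Hx'.
    pose proof (sqrt_1_minus_sqr_pos x Hx').
    apply (ex_derive_continuous (K := R_AbsRing) (V := R_NormedModule)).
    destruct (HdPsi (acos x)) as [l Hl].
    eexists. unfold Rdiv. apply is_derive_Rmult.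
    + apply (is_derive_comp (K := R_AbsRing) (V := R_NormedModule) dPsi acos);
        [exact Hl|apply is_derive_acos; auto].
    + auto_derive; [|reflexivity]. split; [nra|split; [|auto]].
      replace (1 + - (x * (x * 1)))%R with (1 - x ^ 2)%R by ring. lra.
Qed.

Lemma is_RInt_gen_acos_subst (K : C) :
  @is_RInt_gen C_R_NormedModule (fun x => K * RtoC (h x))%C (at_right (-1)) (at_left 1)
    (K * RtoC (Psi PI - Psi 0))%C.
Proof.
  set (L := fun y => (K * RtoC (Psi (acos y)))%C).
  assert (HL : forall F p, ProperFilter F -> filterlim acos F (locally p) ->
    filterlim L F (locally (K * RtoC (Psi p))%C)).
  { intros F p HF Hacos.
    apply (filterlim_comp _ _ _ (fun y => Psi (acos y)) (fun v => K * RtoC v)%C _ (locally (Psi p)));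
      [|apply filterlim_Cmult_RtoC].
    apply (filterlim_comp _ _ _ acos Psi _ (locally p)); [exact Hacos|].
    apply (ex_derive_continuous (K := R_AbsRing) (V := R_NormedModule)). eexists; apply HPsi. }
  assert (Lim : filterlim (fun ab : R * R => plus (L (fst ab)) (opp (L (snd ab))))
      (filter_prod (at_right (-1)) (at_left 1))
      (locally (plus (K * RtoC (Psi PI))%C (opp (K * RtoC (Psi 0))%C)))).
  { apply (filterlim_comp_2 (G := locally (K * RtoC (Psi PI))%C)
      (H := locally (opp (K * RtoC (Psi 0))%C)) (fun ab : R * R => L (fst ab))
      (fun ab => opp (L (snd ab))) plus).
    - apply (filterlim_comp _ _ _ fst L _ (at_right (-1))); [apply filterlim_fst|].
      apply HL; [apply at_right_proper_filter|apply filterlim_acos_at_right_m1].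
    - apply (filterlim_comp _ _ _ snd (fun b => opp (L b)) _ (at_left 1)); [apply filterlim_snd|].
      apply (filterlim_comp _ _ _ L opp _ (locally (K * RtoC (Psi 0))%C));
        [|apply (filterlim_opp (V := C_R_NormedModule))].
      apply HL; [apply at_left_proper_filter|apply filterlim_acos_at_left_1].
    - apply (filterlim_plus (V := C_R_NormedModule)). }
  replace (K * RtoC (Psi PI - Psi 0))%C with (K * RtoC (Psi PI) - K * RtoC (Psi 0))%C
    by (rewrite RtoC_minus; ring).
  intros P HP. unfold filtermapi.
  pose proof (Lim P HP) as HLim. unfold filtermap in HLim.
  generalize (filter_and _ _ interior_eventually HLim). apply filter_imp.
  intros [a b] [[Ha Hb] HPab]. exists (L a - L b)%C. split; [|exact HPab].
  replace (L a - L b)%C with (K * RtoC (Psi (acos a) - Psi (acos b)))%C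
    by (unfold L; rewrite RtoC_minus; ring).
  apply is_RInt_Cmult, is_RInt_RtoC, is_RInt_acos_subst; auto.
Qed.

End AcosSubstitution.

(** * Orthogonality *)

Definition int_cos (d t : R) : R := if Req_EM_T d 0 then t else (sin (d * t) / d)%R.

Lemma is_derive_int_cos d t : is_derive (int_cos d) t (cos (d * t)).
Proof.
  unfold int_cos. destruct (Req_EM_T d 0) as [->|E].
  - rewrite Rmult_0_l, cos_0. apply (is_derive_id (K := R_AbsRing)).
  - auto_derive; auto. field; auto.
Qed.

Lemma int_cos_0 d : int_cos d 0 = 0%R.
Proof. unfold int_cos. destruct (Req_EM_T d 0); auto. rewrite Rmult_0_r, sin_0. unfold Rdiv; ring. Qed.

Lemma int_cos_PI (z : Z) : int_cos (IZR z) PI = if Z.eqb z 0 then PI else 0%R.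
Proof.
  unfold int_cos. destruct (Req_EM_T (IZR z) 0) as [E|E]; destruct (Z.eqb_spec z 0) as [Ez|Ez].
  - reflexivity.
  - apply eq_IZR_R0 in E. lia.
  - subst. simpl in E. lra.
  - rewrite sin_eq_0_1 by (exists z; reflexivity). unfold Rdiv; ring.
Qed.

Definition prod_density (a : half) (j k : nat) (t : R) : R :=
  match a with
  | mhalf => ((cos ((INR j - INR k) * t) + cos ((INR j + INR k) * t)) / 2)%R
  | phalf => (cos ((INR j - INR k) * t) - cos ((INR j + INR k + 1) * t))%R
  end.

Definition prod_antider (a : half) (j k : nat) (t : R) : R :=
  match a with
  | mhalf => ((int_cos (INR j - INR k) t + int_cos (INR j + INR k) t) / 2)%R
  | phalf => (int_cos (INR j - INR k) t - int_cos (INR j + INR k + 1) t)%R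
  end.

Lemma is_derive_prod_antider a j k t : is_derive (prod_antider a j k) t (prod_density a j k t).
Proof.
  destruct a; simpl.
  - eapply is_derive_Req.
    + apply (is_derive_Rext (fun t => (int_cos (INR j - INR k) t + int_cos (INR j + INR k) t) * / 2)%R);
        [reflexivity|].
      apply is_derive_Rmult; [apply is_derive_Rplus; apply is_derive_int_cos|apply is_derive_Rconst].
    + unfold Rdiv. ring.
  - apply is_derive_Rminus; apply is_derive_int_cos.
Qed.

Lemma ex_derive_prod_density a j k t : ex_derive (prod_density a j k) t.
Proof. destruct a; unfold prod_density; auto_derive; auto. Qed.

Lemma Wt_pos a s : (0 < Wt a s)%R.
Proof. destruct a, s; simpl; lra. Qed.

Lemma prod_antider_0_PI a j k :
  (prod_antider a j k PI - prod_antider a j k 0 = mid j k * PI / Wt a j)%R.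
Proof.
  assert (Z1 : (INR j - INR k = IZR (Z.of_nat j - Z.of_nat k))%R)
    by (rewrite minus_IZR, <- !INR_IZR_INZ; reflexivity).
  assert (Z2 : (INR j + INR k = IZR (Z.of_nat j + Z.of_nat k))%R)
    by (rewrite plus_IZR, <- !INR_IZR_INZ; reflexivity).
  assert (Z3 : (INR j + INR k + 1 = IZR (Z.of_nat j + Z.of_nat k + 1))%R)
    by (rewrite !plus_IZR, <- !INR_IZR_INZ; reflexivity).
  pose proof (Wt_pos a j).
  unfold mid. destruct a; simpl prod_antider; rewrite !int_cos_0;
    [rewrite Z1, Z2, !int_cos_PI|rewrite Z1, Z3, !int_cos_PI];
    destruct (Nat.eqb_spec j k) as [<-|E]; rewrite ?Z.sub_diag.
  - destruct j as [|j]; simpl; [field|].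
    destruct (Z.eqb_spec (Z.pos (Pos.of_succ_nat j) + Z.pos (Pos.of_succ_nat j)) 0); [lia|field; lra].
  - destruct (Z.eqb_spec (Z.of_nat j - Z.of_nat k) 0); [lia|].
    destruct (Z.eqb_spec (Z.of_nat j + Z.of_nat k) 0); [lia|field; lra].
  - destruct (Z.eqb_spec (Z.of_nat j + Z.of_nat j + 1) 0); [lia|].
    simpl. field.
  - destruct (Z.eqb_spec (Z.of_nat j - Z.of_nat k) 0); [lia|].
    destruct (Z.eqb_spec (Z.of_nat j + Z.of_nat k + 1) 0); [lia|field; lra].
Qed.

Definition weight (a : half) (x : R) : R :=
  (Rpower (1 - x) (aval a) * Rpower (1 + x) (- (1 / 2)))%R.

Lemma Rpower_half y : (0 < y)%R -> Rpower y (1 / 2) = sqrt y.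
Proof. intros H. replace (1 / 2)%R with (/ 2)%R by field. apply Rpower_sqrt; auto. Qed.

Lemma Rpower_minus_half y : (0 < y)%R -> Rpower y (- (1 / 2)) = (/ sqrt y)%R.
Proof. intros H. rewrite Rpower_Ropp, Rpower_half; auto. Qed.

Lemma Jr_mhalf_acos j x : (-1 < x < 1)%R -> Jr mhalf j x = cos (INR j * acos x).
Proof. intros H. unfold Jr. rewrite <- (cos_acos x) at 1 by lra. rewrite J_mhalf_cos. reflexivity. Qed.

Lemma Jr_phalf_acos j x : (-1 < x < 1)%R ->
  Jr phalf j x = (sin ((INR j + 1/2) * acos x) / sin (acos x / 2))%R.
Proof.
  intros H. pose proof (acos_bound_lt x H).
  unfold Jr. rewrite <- (cos_acos x) at 1 by lra. rewrite J_phalf_cos; [reflexivity|].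
  apply Rgt_not_eq, sin_gt_0; lra.
Qed.

Lemma Jr_Jr_weight a j k x : (-1 < x < 1)%R ->
  (Jr a j x * Jr a k x * weight a x = prod_density a j k (acos x) / sqrt (1 - x ^ 2))%R.
Proof.
  intros Hx. pose proof (acos_bound_lt x Hx) as Hb.
  assert (Hs1 : (0 < sqrt (1 - x))%R) by (apply sqrt_lt_R0; lra).
  assert (Hs2 : (0 < sqrt (1 + x))%R) by (apply sqrt_lt_R0; lra).
  replace (1 - x ^ 2)%R with ((1 - x) * (1 + x))%R by ring. rewrite sqrt_mult by lra.
  set (t := acos x) in *.
  destruct a; unfold weight, aval.
  - rewrite !Jr_mhalf_acos, !Rpower_minus_half by lra. fold t. simpl.
    rewrite Rmult_minus_distr_r, Rmult_plus_distr_r, cos_minus, cos_plus. field. lra.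
  - rewrite !Jr_phalf_acos, Rpower_half, Rpower_minus_half by lra. fold t. simpl.
    assert (Ht2 : (0 < sin (t / 2))%R) by (apply sin_gt_0; lra).
    assert (E1 : (1 - x = 2 * sin (t / 2) ^ 2)%R).
    { rewrite <- (cos_acos x) by lra. fold t. replace t with (2 * (t / 2))%R at 1 by field.
      rewrite cos_2a_sin. ring. }
    replace ((INR j - INR k) * t)%R with ((INR j + 1/2) * t - (INR k + 1/2) * t)%R by ring.
    replace ((INR j + INR k + 1) * t)%R with ((INR j + 1/2) * t + (INR k + 1/2) * t)%R by field.
    rewrite cos_minus, cos_plus.
    apply (Rmult_eq_reg_r (sqrt (1 - x) * sqrt (1 + x))); [|nra].
    field_simplify; [|lra|lra].
    rewrite pow2_sqrt by lra. rewrite E1. field. lra.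
Qed.

Lemma is_derive_rsum (F dF : nat -> R -> R) n t : (forall k, is_derive (F k) t (dF k t)) ->
  is_derive (fun t => rsum (fun k => F k t) n) t (rsum (fun k => dF k t) n).
Proof.
  intros H. induction n; simpl; [apply is_derive_Rconst|apply is_derive_Rplus; auto].
Qed.

Lemma ex_derive_rsum (F : nat -> R -> R) n t : (forall k, ex_derive (F k) t) ->
  ex_derive (fun t => rsum (fun k => F k t) n) t.
Proof.
  intros H. induction n as [|n [l1 H1]]; simpl.
  - exists 0%R. apply is_derive_Rconst.
  - destruct (H n) as [l2 H2]. eexists. apply is_derive_Rplus; eauto.
Qed.

Lemma is_RInt_gen_orthogonality a s1 (M : nat -> R) n (K : C) : (s1 < n)%nat ->
  @is_RInt_gen C_R_NormedModule
    (fun x => K * RtoC (Jr a s1 x * weight a x * rsum (fun k => M k * Jr a k x)%R n))%C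
    (at_right (-1)) (at_left 1) (K * RtoC (M s1 * PI / Wt a s1))%C.
Proof.
  intros Hn.
  set (Psi := fun t => rsum (fun k => M k * prod_antider a s1 k t)%R n).
  set (dPsi := fun t => rsum (fun k => M k * prod_density a s1 k t)%R n).
  replace (M s1 * PI / Wt a s1)%R with (Psi PI - Psi 0)%R.
  - apply (is_RInt_gen_acos_subst Psi dPsi).
    + intros t. apply (is_derive_rsum (fun k t => M k * prod_antider a s1 k t)%R
                                       (fun k t => M k * prod_density a s1 k t)%R).
      intros k. eapply is_derive_Req;
        [apply is_derive_Rmult; [apply is_derive_Rconst|apply is_derive_prod_antider]|].
      cbv beta. ring.
    + intros t. apply (ex_derive_rsum (fun k t => M k * prod_density a s1 k t)%R).
      intros k. destruct (ex_derive_prod_density a s1 k t) as [l Hl].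
      eexists. apply is_derive_Rmult; [apply is_derive_Rconst|exact Hl].
    + intros x Hx. unfold dPsi.
      rewrite <- (rsum_scal _ n (Jr a s1 x * weight a x)).
      unfold Rdiv. rewrite (Rmult_comm (rsum _ n)), <- rsum_scal. apply rsum_ext. intros k _.
      pose proof (Jr_Jr_weight a s1 k x Hx) as E. unfold Rdiv in E.
      transitivity (M k * (Jr a s1 x * Jr a k x * weight a x))%R; [ring|]. rewrite E. ring.
  - unfold Psi. rewrite <- rsum_minus.
    rewrite <- (rsum_mid_l (fun k => M k * PI / Wt a s1)%R s1 n Hn).
    apply rsum_ext. intros k _. rewrite <- Rmult_minus_distr_l, prod_antider_0_PI.
    unfold mid. destruct (Nat.eqb_spec s1 k) as [<-|]; unfold Rdiv; ring.
Qed.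

Lemma Cpowz_sub_le z n1 n2 : (n1 <= n2)%nat ->
  Cpowz z (Z.of_nat n1 - Z.of_nat n2) = (/ Cpow z (n2 - n1))%C.
Proof.
  intros H. unfold Cpowz. destruct (Z.leb_spec 0 (Z.of_nat n1 - Z.of_nat n2)).
  - replace n1 with n2 by lia. rewrite Nat.sub_diag, Z.sub_diag. simpl. field.
  - do 2 f_equal. lia.
Qed.

Lemma Gamma_is_of_expansion n1 n2 a1 a2 s1 s2 c r (P : R -> R) (M : nat -> R) N :
  (n1 <= n2)%nat -> (s1 < N)%nat ->
  (forall x, (-1 < x < 1)%R ->
     is_circle_integral c r (fun u => J a2 s2 u * / Cpow (u - 1) (n2 - n1) / (RtoC x - u))%C
       (- two_pi_i * RtoC (P x))%C) ->
  (forall x, (-1 < x < 1)%R -> P x = rsum (fun k => M k * Jr a1 k x)%R N) ->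
  Gamma_is n1 a1 s1 n2 a2 s2 c r (RtoC (M s1)).
Proof.
  intros Hn HN HI HP.
  exists (- two_pi_i * RtoC (M s1 * PI / Wt a1 s1))%C. split.
  - eapply is_RInt_gen_ext; [|apply (is_RInt_gen_orthogonality a1 s1 M N (- two_pi_i)%C HN)].
    generalize interior_eventually. apply filter_imp. intros [a b] [Ha Hb] x Hx. simpl in *.
    assert (Hx' : (-1 < x < 1)%R) by (apply (in_interval_interior a b x Ha Hb); lra).
    symmetry. apply (is_RInt_unique (V := C_R_CompleteNormedModule)).
    replace (- two_pi_i * RtoC (Jr a1 s1 x * weight a1 x * rsum (fun k => M k * Jr a1 k x)%R N))%C
      with (J a1 s1 (RtoC x) * RtoC (weight a1 x) * (- two_pi_i * RtoC (P x)))%C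
      by (rewrite J_RtoC, HP by auto; rewrite !RtoC_mult; ring).
    eapply is_RInt_ext; [|apply (is_circle_integral_scal _ _ _ _
      (J a1 s1 (RtoC x) * RtoC (weight a1 x))%C (HI x Hx'))].
    intros th _. cbv beta. unfold Gintegrand. rewrite Cpowz_sub_le by auto. unfold weight.
    match goal with |- ?u = ?v => change (@eq C u v) end. unfold Cdiv. ring.
  - replace (RtoC (2 * PI) * Ci)%C with two_pi_i
      by (unfold two_pi_i, RtoC, Ci, Cmult; simpl; f_equal; ring).
    pose proof PI_RGT_0. pose proof (Wt_pos a1 s1).
    assert (two_pi_i <> 0%C) by (intros E; apply (f_equal snd) in E; simpl in E; lra).
    rewrite !RtoC_div, RtoC_opp, !RtoC_mult by lra.
    field. repeat split; auto; apply RtoC_neq_0; lra.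
Qed.

Theorem proposition4p7 :
  forall (s1 s2 n1 n2 : nat), (1 <= n1)%nat -> (1 <= n2)%nat ->
  forall (c : C) (r : R),
    (forall t : R, (-1 <= t <= 1)%R -> (Cmod (RtoC t - c) < r)%R) ->
    ((n1 <= n2)%nat ->
       Gamma_is n1 mhalf s1 n2 phalf s2 c r
         (RtoC (mconv (mpow (mconv Tm phim) (n2 - n1)) Tm s2 s1))) /\
    ((n1 < n2)%nat ->
       Gamma_is n1 phalf s1 n2 phalf s2 c r
         (RtoC (mpow (mconv Tm phim) (n2 - n1) s2 s1))) /\
    ((n1 < n2)%nat ->
       Gamma_is n1 phalf s1 n2 mhalf s2 c r
         (RtoC (mconv (mpow (mconv phim Tm) (n2 - n1 - 1)) phim s2 s1))) /\
    ((n1 < n2)%nat ->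
       Gamma_is n1 mhalf s1 n2 mhalf s2 c r
         (RtoC (mpow (mconv phim Tm) (n2 - n1) s2 s1))).
Proof.
  intros s1 s2 n1 n2 _ _ c r Hin.
  set (N := S (s1 + s2)).
  split; [|split; [|split]]; intros Hn.
  - apply (Gamma_is_of_expansion _ _ _ _ _ _ c r (coefW (n2 - n1) s2) _ N); [lia|lia| |].
    + intros x Hx. exact (proj2 (is_circle_integral_J_coef c r x Hin Hx _) s2).
    + intros x _. apply coefW_expand_mhalf. lia.
  - apply (Gamma_is_of_expansion _ _ _ _ _ _ c r (coefW (n2 - n1) s2) _ N); [lia|lia| |].
    + intros x Hx. exact (proj2 (is_circle_integral_J_coef c r x Hin Hx _) s2).
    + intros x _. apply coefW_expand. lia.
  - apply (Gamma_is_of_expansion _ _ _ _ _ _ c r (coefT (n2 - n1) s2) _ N); [lia|lia| |].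
    + intros x Hx. exact (proj1 (is_circle_integral_J_coef c r x Hin Hx _) s2).
    + intros x _. set (m := (n2 - n1 - 1)%nat).
      replace (n2 - n1)%nat with (S m) by (unfold m; lia).
      apply coefT_S_expand. lia.
  - apply (Gamma_is_of_expansion _ _ _ _ _ _ c r (coefT (n2 - n1) s2) _ N); [lia|lia| |].
    + intros x Hx. exact (proj1 (is_circle_integral_J_coef c r x Hin Hx _) s2).
    + intros x _. apply coefT_expand. lia.
Qed.
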